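(* Let $k\ge3$ and $p\in(p_k,p_{k+1}]$, and let $\theta\in\bigl(\frac{2\pi}{k+2},\frac{2\pi}{k+1}\bigr]$ be defined by $2\cos\theta=\frac{2p-1}{1-p}$. Put $$G=\frac{2(1-\cos\theta)}{(k+1)-\dfrac{\sin\theta}{1-\cos\theta}\tan\bigl(\tfrac{k+1}{2}\theta\bigr)}.$$ Then $g_{\widetilde P_k}(p)=(1-p)(1-G)$, and the unique minimizer $x=(x_1,\dots,x_k)$ (with $x_a$ the weight of $v_a$) in the definition of $g_{\widetilde P_k}(p)$ is $$x_a=\frac{G}{2-2\cos\theta}\Bigl[1-\cos(a\theta)-\sin(a\theta)\tan\bigl(\tfrac{k+1}{2}\theta\bigr)\Bigr],\qquad a=1,\dots,k.$$ Furthermore, for $p\in(p_k,p_{k+1})$ one has $g_{\widetilde P_{k-1}}(p)>g_{\widetilde P_k}(p)$.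
   Context: A colored regularity graph (CRG) $K$ is a finite complete graph whose vertices are each colored white or black and whose edges are each colored white, black or gray. For $V(K)=\{v_1,\dots,v_k\}$ and $p\in[0,1]$, $M_K(p)$ is the symmetric $k\times k$ matrix with diagonal entry $p$ for a white vertex and $1-p$ for a black vertex, and off-diagonal entry $(i,j)$ equal to $p$ if $v_iv_j$ is white, $1-p$ if black, $0$ if gray; $g_K(p)=\min\{x^TM_K(p)x:x\in\mathbb R^k,\ x\ge0,\ \sum_ix_i=1\}$. For $k\ge2$, $\widetilde P_k$ is the CRG with $k$ white vertices $v_1,\dots,v_k$, gray edges $v_iv_{i+1}$ ($1\le i<k$) and all other edges black. For $k\ge2$, $p_k=1-\frac{1}{2\cos(2\pi/(k+1))+2}$. *)

From HB Require Import structures.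
From mathcomp Require Import all_boot all_order all_algebra.
From mathcomp Require Import all_classical all_reals all_analysis.
Set Implicit Arguments. Unset Strict Implicit. Unset Printing Implicit Defensive.
Import Order.TTheory GRing.Theory Num.Theory.
Local Open Scope classical_set_scope.
Local Open Scope ring_scope.

Inductive vcolor := VWhite | VBlack.
Inductive ecolor := EWhite | EBlack | EGray.

(* A colored regularity graph: complete graph on vertex set 'I_n; the
   edge colour function is symmetric; its value on the diagonal is unused. *)
Unset Implicit Arguments.
Record CRG := MkCRG {
  crg_size : nat;
  crg_vcol : 'I_crg_size -> vcolor;
  crg_ecol : 'I_crg_size -> 'I_crg_size -> ecolor;
  crg_ecol_sym : forall i j, crg_ecol i j = crg_ecol j i }.

Set Implicit Arguments.
Section CRGDefs.
Variable R : realType.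

Definition vweight (c : vcolor) (p : R) : R :=
  match c with VWhite => p | VBlack => 1 - p end.
Definition eweight (c : ecolor) (p : R) : R :=
  match c with EWhite => p | EBlack => 1 - p | EGray => 0 end.

Definition M_K (K : CRG) (p : R) : 'M[R]_(crg_size K) :=
  \matrix_(i, j) (if i == j then vweight (crg_vcol K i) p
                  else eweight (crg_ecol K i j) p).

Definition qform (n : nat) (M : 'M[R]_n) (x : 'I_n -> R) : R :=
  \sum_(i < n) \sum_(j < n) x i * M i j * x j.

Definition in_simplex (n : nat) (x : 'I_n -> R) : Prop :=
  (forall i, 0 <= x i) /\ \sum_(i < n) x i = 1.

Definition g_K (K : CRG) (p : R) : R :=
  inf [set y | exists2 x, in_simplex x & y = qform (M_K K p) x].

Definition is_minimizer (K : CRG) (p : R) (x : 'I_(crg_size K) -> R) : Prop :=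
  in_simplex x /\ qform (M_K K p) x = g_K K p.

Definition p_k (k : nat) : R :=
  1 - (2 * cos (2 * pi / k.+1%:R) + 2)^-1.
End CRGDefs.
Arguments M_K {R}.
Arguments g_K {R}.
Arguments is_minimizer {R}.
Arguments qform {R n}.
Arguments in_simplex {R n}.

Definition Pk_ecol (k : nat) (i j : 'I_k) : ecolor :=
  if ((i : nat).+1 == j) || ((j : nat).+1 == i) then EGray else EBlack.

Lemma Pk_ecol_sym k (i j : 'I_k) : Pk_ecol i j = Pk_ecol j i.
Proof. by rewrite /Pk_ecol orbC. Qed.

Definition Ptilde (k : nat) : CRG :=
  @MkCRG k (fun _ => VWhite) (@Pk_ecol k) (@Pk_ecol_sym k).

From HB Require Import structures.
From mathcomp Require Import all_boot all_order all_algebra.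
From mathcomp Require Import all_classical all_reals all_analysis.
From mathcomp Require Import ring lra zify.
Set Implicit Arguments. Unset Strict Implicit. Unset Printing Implicit Defensive.
Import Order.TTheory GRing.Theory Num.Theory.
Local Open Scope ring_scope.

(* With 2 cos th = (2p - 1) / (1 - p), the quadratic form of M_{P_k}(p) is
   (1 - p) ((sum x)^2 + x^T (2 cos th I - A) x), where A is the adjacency matrix
   of the path on k vertices.  A discrete Fourier expansion on the (k+1)-cycle
   shows that x^T (2 c0 I - A) x >= 0 whenever sum x = 0, with
   c0 = cos (2 pi / (k+1)); and p > p_k says exactly that cos th > c0.  So the
   form is strictly convex on the simplex, and the point where (2 cos th I - A) x
   is constant is its unique minimizer.  That point solves a linear recurrence
   whose solution vanishing at 0 and k+1 is the stated trigonometric profile,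
   positive in the given range of th.  On P_{k-1} the last coordinate is forced
   to 0, which costs a positive amount by strict convexity. *)

Section PathForm.
Variable R : realType.

Lemma sum_cos_mul_eq0 (n d : nat) : (0 < d < n)%N ->
  \sum_(j < n) cos (j%:R * d%:R * (2 * pi / n%:R)) = 0 :> R.
Proof.
case/andP=> d_gt0 d_lt_n.
have n_neq0 : (n%:R : R) != 0 by rewrite pnatr_eq0 -lt0n (leq_ltn_trans _ d_lt_n).
set h : R := d%:R * pi / n%:R.
have sin_h_gt0 : 0 < sin h.
  apply: sin_gt0_pi; apply/andP; split.
    by rewrite /h divr_gt0 ?mulr_gt0 ?pi_gt0 ?ltr0n // (leq_ltn_trans _ d_lt_n).
  rewrite /h ltr_pdivrMr ?ltr0n ?(leq_ltn_trans _ d_lt_n) //.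
  by rewrite mulrC ltr_pM2l ?pi_gt0 // ltr_nat.
have telescoping (j : nat) : 2 * sin h * cos (j%:R * d%:R * (2 * pi / n%:R))
    = sin ((2 * j.+1%:R - 1) * h) - sin ((2 * j%:R - 1) * h).
  have -> : j%:R * d%:R * (2 * pi / n%:R) = 2 * j%:R * h by rewrite /h; ring.
  have -> : (2 * j.+1%:R - 1) * h = 2 * j%:R * h + h by rewrite -natr1; ring.
  have -> : (2 * j%:R - 1) * h = 2 * j%:R * h - h by ring.
  rewrite sinD sinB; ring.
have : 2 * sin h * \sum_(j < n) cos (j%:R * d%:R * (2 * pi / n%:R)) = 0.
  rewrite mulr_sumr; under eq_bigr do rewrite telescoping.
  rewrite -(big_mkord xpredT (fun j => sin ((2 * j.+1%:R - 1) * h)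
                                     - sin ((2 * j%:R - 1) * h))).
  rewrite (telescope_sumr (fun j : nat => sin ((2 * j%:R - 1) * h))) //.
  have -> : (2 * n%:R - 1) * h = - h + (pi *+ 2) *+ d.
    by rewrite /h -[(pi *+ 2) *+ d]mulr_natr -[pi *+ 2]mulr_natr; field.
  by rewrite (periodicn (@sinD2pi R)) mulr0 add0r mulN1r subrr.
by move/eqP; rewrite !mulf_eq0 (gt_eqF sin_h_gt0) pnatr_eq0 orbF => /eqP.
Qed.

Lemma sum_cos_mul_sub (n a b : nat) : (a < n)%N -> (b < n)%N ->
  \sum_(j < n) cos (j%:R * (a%:R - b%:R) * (2 * pi / n%:R))
    = (a == b)%:R * n%:R :> R.
Proof.
move=> a_lt_n b_lt_n; case: ltngtP => [a_lt_b|b_lt_a|->].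
- under eq_bigr do rewrite -opprB -natrB ?(ltnW a_lt_b) // mulrN mulNr cosN.
  by rewrite mul0r; apply: sum_cos_mul_eq0; lia.
- under eq_bigr do rewrite -natrB ?(ltnW b_lt_a) //.
  by rewrite mul0r; apply: sum_cos_mul_eq0; lia.
- under eq_bigr do rewrite subrr mulr0 mul0r cos0.
  by rewrite sumr_const card_ord mul1r.
Qed.

Lemma sqr_sum_cos_add_sqr_sum_sin (I : finType) (y t : I -> R) :
  (\sum_i y i * cos (t i)) ^+ 2 + (\sum_i y i * sin (t i)) ^+ 2
    = \sum_i \sum_l y i * y l * cos (t i - t l).
Proof.
rewrite !expr2 !mulr_suml -big_split; apply: eq_bigr => i _ /=.
rewrite !mulr_sumr -big_split; apply: eq_bigr => l _ /=.
by rewrite cosB; ring.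
Qed.

Definition pathM (c : R) (i l : nat) : R :=
  (i == l)%:R * (2 * c) - ((i.+1 == l)%:R + (l.+1 == i)%:R).

Definition pathQ (c : R) {k : nat} (y : 'I_k -> R) : R :=
  \sum_(i < k) \sum_(l < k) y i * pathM c i l * y l.

Lemma pathQ_fourier (k : nat) (y : 'I_k -> R) :
  \sum_(j < k.+1) (cos (2 * pi / k.+1%:R) - cos (j%:R * (2 * pi / k.+1%:R))) *
    ((\sum_(i < k) y i * cos (j%:R * i%:R * (2 * pi / k.+1%:R))) ^+ 2
     + (\sum_(i < k) y i * sin (j%:R * i%:R * (2 * pi / k.+1%:R))) ^+ 2)
  = k.+1%:R / 2 * pathQ (cos (2 * pi / k.+1%:R)) y.
Proof.
set w := 2 * pi / k.+1%:R.
have expand (j : nat) : (cos w - cos (j%:R * w)) *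
    ((\sum_(i < k) y i * cos (j%:R * i%:R * w)) ^+ 2
     + (\sum_(i < k) y i * sin (j%:R * i%:R * w)) ^+ 2)
  = \sum_(i < k) \sum_(l < k) y i * y l *
      (cos w * cos (j%:R * (i%:R - l%:R) * w)
       - (cos (j%:R * (i.+1%:R - l%:R) * w) + cos (j%:R * (i%:R - l.+1%:R) * w)) / 2).
  rewrite sqr_sum_cos_add_sqr_sum_sin mulr_sumr; apply: eq_bigr => i _.
  rewrite mulr_sumr; apply: eq_bigr => l _; rewrite -[i.+1%:R]natr1 -[l.+1%:R]natr1.
  have -> : j%:R * (i%:R + 1 - l%:R) * w
    = j%:R * i%:R * w - j%:R * l%:R * w + j%:R * w by ring.
  have -> : j%:R * (i%:R - (l%:R + 1)) * w
    = j%:R * i%:R * w - j%:R * l%:R * w - j%:R * w by ring.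
  have -> : j%:R * (i%:R - l%:R) * w = j%:R * i%:R * w - j%:R * l%:R * w by ring.
  set u := j%:R * i%:R * w - j%:R * l%:R * w; set s := j%:R * w.
  have -> : cos (u + s) + cos (u - s) = 2 * cos u * cos s.
    by rewrite (cosD u s) (cosB u s); ring.
  by field.
under eq_bigr do rewrite expand.
rewrite exchange_big /pathQ mulr_sumr; apply: eq_bigr => i _ /=.
rewrite exchange_big mulr_sumr; apply: eq_bigr => l _ /=.
have i_lt : (i < k.+1)%N := ltnW (ltn_ord i).
have l_lt : (l < k.+1)%N := ltnW (ltn_ord l).
rewrite -mulr_sumr sumrB -mulr_sumr -mulr_suml big_split /=.
rewrite !sum_cos_mul_sub ?ltnS // [(i : nat) == l.+1]eq_sym /pathM.
by do 3 case: eqP => _; field.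
Qed.

Lemma cos_mul_le_cos_2pi_div (n j : nat) : (0 < j < n)%N ->
  cos (j%:R * (2 * pi / n%:R)) <= cos (2 * pi / n%:R) :> R.
Proof.
case/andP=> j_gt0 j_lt_n.
have n_gt0 : (0 : R) < n%:R by rewrite ltr0n (leq_ltn_trans _ j_lt_n).
have w_gt0 : 0 < 2 * pi / n%:R :> R by rewrite divr_gt0 ?mulr_gt0 ?pi_gt0.
have in_0pi (m : nat) : (m.*2 <= n)%N -> m%:R * (2 * pi / n%:R) \in `[0, (pi : R)].
  move=> m2_le_n; rewrite in_itv /=; apply/andP; split.
    by rewrite mulr_ge0 ?ler0n ?ltW.
  have := @pi_gt0 R; have : (m.*2)%:R <= n%:R :> R by rewrite ler_nat.
  rewrite mulrA ler_pdivrMr // -mul2n natrM; nra.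
have cos_le (m : nat) : (0 < m)%N -> (m.*2 <= n)%N ->
    cos (m%:R * (2 * pi / n%:R)) <= cos (2 * pi / n%:R) :> R.
  move=> m_gt0 m2_le_n; have [->|m_neq1] := eqVneq m 1%N; first by rewrite mul1r.
  apply/ltW; rewrite ltr_cos ?in_0pi //; last first.
    by rewrite -[X in X \in _]mul1r; apply: (in_0pi 1%N); lia.
  by rewrite -[X in X < _]mul1r ltr_pM2r // ltr1n; lia.
case: (leqP j.*2 n) => j2n; first exact: cos_le.
have -> : cos (j%:R * (2 * pi / n%:R)) = cos ((n - j)%:R * (2 * pi / n%:R)) :> R.
  have nw : n%:R * (2 * pi / n%:R) = pi *+ 2 :> R.
    by rewrite mulrC divfK ?(gt_eqF n_gt0) // mulr_natl.
  rewrite natrB ?(ltnW j_lt_n) // mulrBl nw -[in RHS]cosN opprB.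
  by rewrite -(cosD2pi (j%:R * (2 * pi / n%:R) - pi *+ 2)) subrK.
by apply: cos_le; lia.
Qed.

Lemma pathQ_ge0 (k : nat) (y : 'I_k -> R) :
  \sum_(i < k) y i = 0 -> 0 <= pathQ (cos (2 * pi / k.+1%:R)) y.
Proof.
(* The j = 0 Fourier mode vanishes since sum y = 0; the others have weight >= 0. *)
move=> y_sum0.
rewrite -(@pmulr_rge0 _ (k.+1%:R / 2)) ?divr_gt0 ?ltr0n // -pathQ_fourier.
apply: sumr_ge0 => -[[|j] j_lt] _ /=.
  under eq_bigr do rewrite !mul0r cos0 mulr1.
  under [X in _ + X ^+ 2]eq_bigr do rewrite !mul0r sin0 mulr0.
  by rewrite y_sum0 big1 // expr0n /= addr0 mulr0.
apply: mulr_ge0; last by rewrite addr_ge0 ?sqr_ge0.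
by rewrite subr_ge0 cos_mul_le_cos_2pi_div.
Qed.

Lemma sum_indicator (k m : nat) (F : nat -> R) : (m < k)%N \/ F m = 0 ->
  \sum_(l < k) (m == l)%:R * F l = F m.
Proof.
case=> [m_lt_k | Fm0].
  rewrite (bigD1 (Ordinal m_lt_k)) //= eqxx mul1r big1 ?addr0 // => l.
  by rewrite -val_eqE /= eq_sym => /negbTE->; rewrite mul0r.
by rewrite Fm0; apply: big1 => l _; case: eqP => [<-|_]; rewrite ?Fm0 ?mul0r ?mulr0.
Qed.

Lemma pathMC (c : R) (i l : nat) : pathM c i l = pathM c l i.
Proof. by rewrite /pathM [i == l]eq_sym [(i.+1 == l)%:R + _]addrC. Qed.

Lemma pathQE (c : R) (k : nat) (u : 'I_k -> R) :
  pathQ c u = \sum_(i < k) u i * \sum_(l < k) pathM c i l * u l.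
Proof.
by apply: eq_bigr => i _; rewrite mulr_sumr; apply: eq_bigr => l _; rewrite mulrA.
Qed.

Lemma pathQD (c : R) (k : nat) (u v : 'I_k -> R) :
  pathQ c (fun i => u i + v i)
  = pathQ c u + pathQ c v + 2 * \sum_(i < k) v i * \sum_(l < k) pathM c i l * u l.
Proof.
have split_term (i l : 'I_k) : (u i + v i) * pathM c i l * (u l + v l)
    = u i * pathM c i l * u l + v i * pathM c i l * v l
      + (v i * (pathM c i l * u l) + v l * (pathM c l i * u i)).
  by rewrite (pathMC c l i); ring.
rewrite /pathQ.
under eq_bigr do (under eq_bigr do rewrite split_term; rewrite !big_split /=).
rewrite !big_split /= [X in _ + (_ + X) = _]exchange_big /=.
under [X in _ = _ + _ + 2 * X]eq_bigr do rewrite mulr_sumr.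
ring.
Qed.

Lemma pathQ_shift (c c' : R) (k : nat) (y : 'I_k -> R) :
  pathQ c y = pathQ c' y + 2 * (c - c') * \sum_(i < k) y i ^+ 2.
Proof.
rewrite mulr_sumr /pathQ -big_split; apply: eq_bigr => i _ /=.
have -> : y i ^+ 2 = \sum_(l < k) ((i : nat) == l)%:R * (y i * y l).
  rewrite (bigD1 i) //= eqxx mul1r big1 ?addr0 ?expr2 // => l.
  by rewrite -val_eqE eq_sym => /negbTE->; rewrite mul0r.
rewrite mulr_sumr -big_split; apply: eq_bigr => l _ /=.
by rewrite /pathM; ring.
Qed.

Lemma pathM_apply (c : R) (k : nat) (i : 'I_k) (F : nat -> R) :
  F 0%N = 0 -> F k.+1 = 0 ->
  \sum_(l < k) pathM c i l * F l.+1 = 2 * c * F i.+1 - F i - F i.+2.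
Proof.
move=> F0 Fk1; have i_lt := ltn_ord i.
have split_term (l : 'I_k) : pathM c i l * F l.+1
    = ((i : nat) == l)%:R * (2 * c * F l.+1) - (i.+1 == l)%:R * F l.+1
      - ((l : nat).+1 == i)%:R * F l.+1.
  by rewrite /pathM; ring.
under eq_bigr do rewrite split_term.
rewrite !sumrB (sum_indicator (F := fun l => 2 * c * F l.+1)); last by left.
rewrite (sum_indicator (F := fun l => F l.+1)); last first.
  by case: (ltnP i.+1 k) => ?; [left | right; have -> : i.+2 = k.+1 by lia].
case: (nat_of_ord i) i_lt => [|i'] i_lt.
  by rewrite F0 big1 => [|l _]; rewrite ?mul0r //; ring.
under eq_bigr do rewrite eqSS eq_sym.
by rewrite (sum_indicator (F := fun l => F l.+1)); [ring | left; lia].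
Qed.
End PathForm.

Section Profile.
Variable R : realType.

Definition profile (k : nat) (th : R) (a : nat) : R :=
  1 - cos (a%:R * th) - sin (a%:R * th) * tan (k.+1%:R / 2 * th).

Variables (k : nat) (th : R).

Lemma profile0 : profile k th 0 = 0.
Proof. by rewrite /profile mul0r cos0 sin0 mul0r subrr subr0. Qed.

Lemma profile_rec (a : nat) :
  2 * cos th * profile k th a.+1 - profile k th a - profile k th a.+2 = 2 * cos th - 2.
Proof.
rewrite /profile; set T := tan _.
have -> : a%:R * th = a.+1%:R * th - th by rewrite -[a.+1%:R]natr1; ring.
have -> : a.+2%:R * th = a.+1%:R * th + th by rewrite -[a.+2%:R]natr1; ring.
rewrite cosB sinB cosD sinD; ring.
Qed.

Hypothesis cos_half_neq0 : cos (k.+1%:R / 2 * th) != 0.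

Lemma profileE (a : nat) : profile k th a
  = 1 - cos (a%:R * th - k.+1%:R / 2 * th) / cos (k.+1%:R / 2 * th).
Proof. by rewrite /profile /tan cosB; field. Qed.

Lemma profile_k1 : profile k th k.+1 = 0.
Proof.
rewrite profileE.
have -> : k.+1%:R * th - k.+1%:R / 2 * th = k.+1%:R / 2 * th by field.
by rewrite divff // subrr.
Qed.

Lemma profile_k : profile k th k = profile k th 1.
Proof.
rewrite !profileE -[in LHS]cosN; congr (1 - cos _ / _).
by rewrite -natr1; field.
Qed.

Hypothesis cos_neq1 : cos th != 1.

Lemma sum_profile : \sum_(i < k) profile k th i.+1
  = k.+1%:R - sin th / (1 - cos th) * tan (k.+1%:R / 2 * th).
Proof.
have c1 : 1 - cos th != 0 by apply: contra_neq cos_neq1 => ?; lra.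
have c2 : 2 * cos th - 2 != 0 by apply: contra_neq cos_neq1 => ?; lra.
set f := profile k th.
(* Summing the recurrence, the second differences telescope to boundary terms. *)
have second_diff : \sum_(i < k) ((f i.+2 - f i.+1) - (f i.+1 - f i))
    = (f k.+1 - f k) - (f 1%N - f 0%N).
  by rewrite -(big_mkord xpredT (fun i => (f i.+2 - f i.+1) - (f i.+1 - f i)))
             (telescope_sumr (fun i => f i.+1 - f i)).
have sum_rec :
    \sum_(i < k) (2 * cos th * f i.+1 - f i - f i.+2) = k%:R * (2 * cos th - 2).
  have rec (a : nat) : 2 * cos th * f a.+1 - f a - f a.+2 = 2 * cos th - 2.
    exact: profile_rec.
  by under eq_bigr do rewrite rec; rewrite sumr_const card_ord [k%:R * _]mulr_natl.
have : (2 * cos th - 2) * \sum_(i < k) f i.+1 = k%:R * (2 * cos th - 2) - 2 * f 1%N.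
  rewrite -sum_rec mulr_sumr.
  have -> : \sum_(i < k) (2 * cos th * f i.+1 - f i - f i.+2)
      = \sum_(i < k) ((2 * cos th - 2) * f i.+1)
        - \sum_(i < k) ((f i.+2 - f i.+1) - (f i.+1 - f i)).
    by rewrite -sumrB; apply: eq_bigr => i _; ring.
  by rewrite second_diff /f profile_k1 profile_k profile0; ring.
move=> scaled_sum; apply: (mulfI c2); rewrite scaled_sum /f /profile mul1r.
by field.
Qed.

End Profile.

Section ProfileRange.
Variable R : realType.
Variables (k : nat) (th : R).
Hypotheses (k_gt0 : (0 < k)%N)
  (th_gt : 2 * pi / k.+2%:R < th) (th_le : th <= 2 * pi / k.+1%:R).

Lemma th_gt0 : 0 < th.
Proof. by apply: lt_trans th_gt; rewrite divr_gt0 ?mulr_gt0 ?pi_gt0 ?ltr0n. Qed.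

Lemma th_le_pi : th <= pi.
Proof.
have := @pi_gt0 R; have : (1 : R) <= k%:R by rewrite ler1n.
by move: th_le; rewrite ler_pdivlMr ?ltr0n // -[k.+1%:R]natr1 => ? ? ?; nra.
Qed.

Lemma half_angle_bounds : pi / 2 < k.+1%:R / 2 * th <= pi.
Proof.
have := @pi_gt0 R; have := th_gt0; have : (0 : R) <= k%:R by rewrite ler0n.
move: th_gt th_le; rewrite ltr_pdivrMr ?ltr0n // ler_pdivlMr ?ltr0n //.
have -> : k.+2%:R = k%:R + 2 :> R by rewrite -!natr1; ring.
rewrite -[k.+1%:R]natr1 => ? ? ? ? ?; apply/andP; split; nra.
Qed.

Lemma cos_half_lt0 : cos (k.+1%:R / 2 * th) < 0.
Proof.
have := @pi_gt0 R; case/andP: half_angle_bounds => ? ? ?.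
by rewrite -(cos_pihalf R) ltr_cos // in_itv /=; apply/andP; split; lra.
Qed.

Lemma cos_lt1 : cos th < 1.
Proof.
have := @pi_gt0 R; have := th_gt0; have := th_le_pi => ? ? ?.
by rewrite -cos0 ltr_cos // in_itv /=; apply/andP; split; lra.
Qed.

(* With u = (k+1) th / 2, profile a = (cos (a th - u) - cos u) / (- cos u) and
   |a th - u| <= u - th for 1 <= a <= k. *)
Lemma profile_gt0 (a : nat) : (0 < a <= k)%N -> 0 < profile k th a.
Proof.
case/andP=> a_gt0 a_le_k; have cu_lt0 := cos_half_lt0.
have := @pi_gt0 R; have := th_gt0; case/andP: half_angle_bounds => u_gt u_le ? ?.
rewrite profileE ?lt_eqF //; set u := k.+1%:R / 2 * th in cu_lt0 u_gt u_le *.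
have : (1 : R) <= a%:R by rewrite ler1n.
have : a%:R <= k%:R :> R by rewrite ler_nat.
move=> ? ?; have dist_le : `|a%:R * th - u| <= u - th.
  by rewrite ler_norml /u -[k.+1%:R]natr1; apply/andP; split; nra.
have : cos u < cos (a%:R * th - u).
  have := normr_ge0 (a%:R * th - u) => ?.
  by rewrite -[cos (_ - u)]cos_norm ltr_cos ?in_itv /=; try (apply/andP; split); lra.
move=> cos_lt.
have -> : 1 - cos (a%:R * th - u) / cos u = (cos (a%:R * th - u) - cos u) / - cos u.
  by field; rewrite ltr0_neq0.
by rewrite divr_gt0 ?subr_gt0 ?oppr_gt0.
Qed.

Lemma sum_profile_gt0 :
  0 < k.+1%:R - sin th / (1 - cos th) * tan (k.+1%:R / 2 * th).
Proof.
rewrite -sum_profile ?lt_eqF ?cos_half_lt0 ?cos_lt1 //.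
rewrite (bigD1 (Ordinal k_gt0)) //=; apply: ltr_pwDl; first exact: profile_gt0.
by apply: sumr_ge0 => i _; apply/ltW/profile_gt0; rewrite ltn_ord.
Qed.

Let D := k.+1%:R - sin th / (1 - cos th) * tan (k.+1%:R / 2 * th).
Let G := 2 * (1 - cos th) / D.
Let x (i : 'I_k) := G / (2 - 2 * cos th) * profile k th i.+1.

Lemma candidate_scale : G / (2 - 2 * cos th) = D^-1.
Proof.
have -> : 2 - 2 * cos th = 2 * (1 - cos th) by ring.
by rewrite /G mulrAC mulfV ?mul1r // gt_eqF // mulr_gt0 // subr_gt0 cos_lt1.
Qed.

Lemma candidate_sum1 : \sum_(i < k) x i = 1.
Proof.
rewrite /x candidate_scale -mulr_sumr sum_profile ?lt_eqF ?cos_half_lt0 ?cos_lt1 //.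
by rewrite mulVf ?gt_eqF ?sum_profile_gt0.
Qed.

Lemma candidate_gt0 (i : 'I_k) : 0 < x i.
Proof.
rewrite /x candidate_scale mulr_gt0 ?invr_gt0 ?sum_profile_gt0 //.
exact/profile_gt0/ltn_ord.
Qed.

Lemma pathM_candidate (i : 'I_k) :
  \sum_(l < k) pathM (cos th) i l * x l = - G.
Proof.
pose F a := G / (2 - 2 * cos th) * profile k th a.
have F0 : F 0%N = 0 by rewrite /F profile0 mulr0.
have Fk1 : F k.+1 = 0 by rewrite /F profile_k1 ?mulr0 ?lt_eqF ?cos_half_lt0.
rewrite (pathM_apply _ _ F0 Fk1) /F.
have := profile_rec k th i; have := cos_lt1 => ? rec.
transitivity (G / (2 - 2 * cos th) * (2 * cos th - 2)); first by rewrite -rec; ring.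
by field; lra.
Qed.

End ProfileRange.

Section CRGMinimum.
Variable R : realType.

Lemma g_K_ge (K : CRG) (p m : R) :
  (exists x : 'I_(crg_size K) -> R, in_simplex x) ->
  (forall x, in_simplex x -> m <= qform (M_K K p) x) -> m <= g_K K p.
Proof.
move=> [x0 x0_simplex] lb; apply: lb_le_inf; first by exists (qform (M_K K p) x0), x0.
by move=> _ [x x_simplex ->]; apply: lb.
Qed.

Lemma g_K_min (K : CRG) (p : R) (x0 : 'I_(crg_size K) -> R) : in_simplex x0 ->
  (forall x, in_simplex x -> qform (M_K K p) x0 <= qform (M_K K p) x) ->
  g_K K p = qform (M_K K p) x0.
Proof.
move=> x0_simplex x0_min; apply/eqP; rewrite eq_le g_K_ge ?andbT //; last by exists x0.
apply: ge_inf; last by exists x0.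
by exists (qform (M_K K p) x0) => _ [x x_simplex ->]; apply: x0_min.
Qed.

Lemma in_simplex_vertex (n : nat) (i0 : 'I_n) :
  in_simplex (fun i : 'I_n => (i == i0)%:R : R).
Proof.
split=> [i|]; first exact: ler0n.
by rewrite (bigD1 i0) //= eqxx big1 ?addr0 // => i /negbTE->.
Qed.

Lemma qform_Ptilde (n : nat) (p c : R) (x : 'I_n -> R) :
  2 * c * (1 - p) = 2 * p - 1 ->
  qform (M_K (Ptilde n) p) x = (1 - p) * ((\sum_(i < n) x i) ^+ 2 + pathQ c x).
Proof.
move=> hc.
have -> : (\sum_(i < n) x i) ^+ 2 = \sum_(i < n) \sum_(l < n) x i * x l.
  by rewrite expr2 big_distrl; apply: eq_bigr => i _; rewrite big_distrr.
rewrite /qform /pathQ -big_split mulr_sumr; apply: eq_bigr => i _ /=.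
rewrite -big_split mulr_sumr; apply: eq_bigr => l _ /=.
rewrite mxE /= /Pk_ecol /pathM -val_eqE /=.
have := congr1 (fun t => t * (x i * x l)) hc => /= hc_il.
by case: (@eqP nat i l) => ?; case: (@eqP nat i.+1 l) => ?;
  case: (@eqP nat l.+1 i) => ? /=; first [by exfalso; lia | lra].
Qed.

Definition extend0 (n : nat) (y : 'I_n -> R) (i : 'I_n.+1) : R :=
  oapp y 0 (unlift ord_max i).

Lemma extend0_max (n : nat) (y : 'I_n -> R) : extend0 y ord_max = 0.
Proof. by rewrite /extend0 unlift_none. Qed.

Lemma extend0_widen (n : nat) (y : 'I_n -> R) (j : 'I_n) :
  extend0 y (widen_ord (leqnSn n) j) = y j.
Proof.
have -> : widen_ord (leqnSn n) j = lift ord_max j.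
  by apply: val_inj; rewrite [RHS]lift_max.
by rewrite /extend0 liftK.
Qed.

Lemma sum_extend0 (n : nat) (y : 'I_n -> R) :
  \sum_(i < n.+1) extend0 y i = \sum_(i < n) y i.
Proof.
rewrite big_ord_recr /= extend0_max addr0.
by apply: eq_bigr => i _; rewrite extend0_widen.
Qed.

Lemma qform_Ptilde_extend0 (n : nat) (p : R) (y : 'I_n -> R) :
  qform (M_K (Ptilde n.+1) p) (extend0 y) = qform (M_K (Ptilde n) p) y.
Proof.
rewrite /qform big_ord_recr /= extend0_max [X in _ + X]big1 => [|l _]; last first.
  by rewrite !mul0r.
rewrite addr0; apply: eq_bigr => i _; rewrite big_ord_recr /= extend0_max mulr0 addr0.
by apply: eq_bigr => l _; rewrite !extend0_widen !mxE.
Qed.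

End CRGMinimum.

Section QuadraticProgram.
Variable R : realType.
Variables (k : nat) (p c G : R) (xs : 'I_k -> R).
Hypotheses (hc : 2 * c * (1 - p) = 2 * p - 1)
  (pathM_xs : forall i : 'I_k, \sum_(l < k) pathM c i l * xs l = - G)
  (sum_xs : \sum_(i < k) xs i = 1).

Lemma pathQ_xs : pathQ c xs = - G.
Proof.
by rewrite pathQE; under eq_bigr do rewrite pathM_xs; rewrite -mulr_suml sum_xs mul1r.
Qed.

(* Expand around xs: the cross term vanishes since pathM c xs is constant and the
   increment sums to 0, and the quadratic term is controlled by pathQ_ge0. *)
Lemma pathQ_ge (y : 'I_k -> R) : \sum_(i < k) y i = 1 ->
  - G + 2 * (c - cos (2 * pi / k.+1%:R)) * \sum_(i < k) (y i - xs i) ^+ 2 <= pathQ c y.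
Proof.
move=> sum_y; pose d i := y i - xs i.
have sum_d : \sum_(i < k) d i = 0 by rewrite sumrB sum_y sum_xs subrr.
have -> : pathQ c y = pathQ c (fun i => xs i + d i).
  by congr pathQ; apply: funext => i; rewrite /d addrC subrK.
rewrite pathQD pathQ_xs (pathQ_shift _ (cos (2 * pi / k.+1%:R))).
under [X in _ <= _ + 2 * X]eq_bigr do rewrite pathM_xs.
rewrite -mulr_suml sum_d mul0r mulr0 addr0 addrA lerD2r lerDl.
exact: pathQ_ge0.
Qed.

Lemma qform_Ptilde_xs : qform (M_K (Ptilde k) p) xs = (1 - p) * (1 - G).
Proof. by rewrite (qform_Ptilde _ hc) sum_xs pathQ_xs expr1n. Qed.

Hypothesis p_lt1 : 0 < 1 - p.

Lemma qform_Ptilde_ge (y : 'I_k -> R) : \sum_(i < k) y i = 1 ->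
  (1 - p) * (1 - G) + 2 * (1 - p) * (c - cos (2 * pi / k.+1%:R))
    * \sum_(i < k) (y i - xs i) ^+ 2 <= qform (M_K (Ptilde k) p) y.
Proof.
move=> sum_y; rewrite (qform_Ptilde _ hc) sum_y expr1n.
have := pathQ_ge sum_y; rewrite -(ler_pM2l p_lt1); nra.
Qed.

Hypotheses (c_gt : cos (2 * pi / k.+1%:R) < c) (xs_ge0 : forall i, 0 <= xs i).

Let gap_gt0 : 0 < 2 * (1 - p) * (c - cos (2 * pi / k.+1%:R)).
Proof. by apply: mulr_gt0; [apply: mulr_gt0 | rewrite subr_gt0]. Qed.

Lemma g_Ptilde : g_K (Ptilde k) p = (1 - p) * (1 - G).
Proof.
rewrite -qform_Ptilde_xs; apply: g_K_min => [|y [_ sum_y]]; first by split.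
rewrite qform_Ptilde_xs (le_trans _ (qform_Ptilde_ge sum_y)) // lerDl.
by apply: mulr_ge0; [exact: ltW | apply: sumr_ge0 => i _; exact: sqr_ge0].
Qed.

Lemma minimizer_Ptilde : is_minimizer (Ptilde k) p xs.
Proof. by split; rewrite ?g_Ptilde ?qform_Ptilde_xs. Qed.

Lemma minimizer_Ptilde_uniq (y : 'I_k -> R) : is_minimizer (Ptilde k) p y -> y = xs.
Proof.
move=> [[_ sum_y]]; rewrite g_Ptilde => qform_y.
have := qform_Ptilde_ge sum_y; rewrite qform_y => ge.
have dist0 : \sum_(i < k) (y i - xs i) ^+ 2 = 0.
  apply/eqP; rewrite eq_le sumr_ge0 ?andbT => [|i _]; last exact: sqr_ge0.
  by have := gap_gt0; nra.
apply: funext => i; apply/eqP; rewrite -subr_eq0 -sqrf_eq0; apply/eqP.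
exact: (psumr_eq0P (fun j _ => sqr_ge0 (y j - xs j)) dist0).
Qed.

End QuadraticProgram.

Section DeletedVertex.
Variable R : realType.

Lemma g_Ptilde_pred_gt (k : nat) (p c G : R) (xs : 'I_k -> R) :
  (1 < k)%N -> 0 < 1 - p -> 2 * c * (1 - p) = 2 * p - 1 ->
  cos (2 * pi / k.+1%:R) < c ->
  (forall i : 'I_k, \sum_(l < k) pathM c i l * xs l = - G) ->
  \sum_(i < k) xs i = 1 -> (forall i, 0 < xs i) ->
  (1 - p) * (1 - G) < g_K (Ptilde k.-1) p.
Proof.
case: k xs => [//|n] xs n_gt0 p_lt1 hc c_gt pathM_xs sum_xs xs_gt0 /=.
set gap := 2 * (1 - p) * (c - cos (2 * pi / n.+2%:R)).
have gap_gt0 : 0 < gap by apply: mulr_gt0; [apply: mulr_gt0 | rewrite subr_gt0].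
apply: (@lt_le_trans _ _ ((1 - p) * (1 - G) + gap * xs ord_max ^+ 2)).
  by rewrite ltrDl mulr_gt0 ?exprn_gt0.
apply: g_K_ge => [|y [_ sum_y]].
  by exists (fun i : 'I_n => (i == @Ordinal n 0 n_gt0)%:R); apply: in_simplex_vertex.
have sum_ext : \sum_(i < n.+1) extend0 y i = 1 by rewrite sum_extend0.
rewrite -qform_Ptilde_extend0.
apply: le_trans (qform_Ptilde_ge hc pathM_xs sum_xs p_lt1 sum_ext).
rewrite lerD2l; apply: ler_wpM2l; first exact: ltW.
rewrite (bigD1 ord_max) //= extend0_max sub0r sqrrN lerDl.
by apply: sumr_ge0 => i _; exact: sqr_ge0.
Qed.

End DeletedVertex.

Section Threshold.
Variable R : realType.

Lemma cos_2pi_div_ge0 (n : nat) : (4 <= n)%N -> 0 <= cos (2 * pi / n%:R) :> R.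
Proof.
move=> n_ge4; apply: cos_ge0_pihalf.
have := @pi_gt0 R; have : (4 : R) <= n%:R by rewrite ler_nat.
have n_gt0 : (0 : R) < n%:R by rewrite ltr0n; lia.
have : 0 <= 2 * pi / n%:R :> R by rewrite divr_ge0 ?mulr_ge0 ?ler0n ?pi_ge0.
by rewrite ler_pdivrMr // => ? ? ?; apply/andP; split; nra.
Qed.

Lemma p_k_lt1 (m : nat) : (3 <= m)%N -> p_k R m < 1.
Proof.
move=> m_ge3; have := @cos_2pi_div_ge0 m.+1 m_ge3.
by rewrite /p_k ltrBlDl ltrDr invr_gt0 => ?; lra.
Qed.

Lemma cos_2pi_div_lt (m : nat) (p c : R) : (3 <= m)%N -> 0 < 1 - p ->
  2 * c * (1 - p) = 2 * p - 1 -> p_k R m < p -> cos (2 * pi / m.+1%:R) < c.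
Proof.
move=> m_ge3 p_lt1 hc; have := @cos_2pi_div_ge0 m.+1 m_ge3.
set c0 := cos _ => c0_ge0; have c0_pos : 0 < 2 * c0 + 2 by lra.
rewrite /p_k -/c0 ltrBlDl -ltrBlDr -[_^-1]mul1r ltr_pdivlMr // => ?; nra.
Qed.

End Threshold.

Theorem mainTheorem10 (R : realType) (k : nat) (p theta : R) :
  (3 <= k)%N ->
  p_k R k < p -> p <= p_k R k.+1 ->
  2 * pi / k.+2%:R < theta -> theta <= 2 * pi / k.+1%:R ->
  2 * cos theta = (2 * p - 1) / (1 - p) ->
  let G := 2 * (1 - cos theta) /
           (k.+1%:R - sin theta / (1 - cos theta) * tan (k.+1%:R / 2 * theta)) in
  let x : 'I_(crg_size (Ptilde k)) -> R := fun i =>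
    G / (2 - 2 * cos theta) *
      (1 - cos ((i : nat).+1%:R * theta)
         - sin ((i : nat).+1%:R * theta) * tan (k.+1%:R / 2 * theta)) in
  [/\ g_K (Ptilde k) p = (1 - p) * (1 - G),
      is_minimizer (Ptilde k) p x,
      (forall y, is_minimizer (Ptilde k) p y -> y = x)
    & (p < p_k R k.+1 -> g_K (Ptilde k.-1) p > g_K (Ptilde k) p)].
Proof.
move=> k_ge3 p_gt p_le th_gt th_le cos_th G x.
have k_gt0 : (0 < k)%N by lia.
have p_lt1 : 0 < 1 - p by rewrite subr_gt0 (le_lt_trans p_le) ?p_k_lt1 //; lia.
have hc : 2 * cos theta * (1 - p) = 2 * p - 1 by rewrite cos_th divfK ?gt_eqF.
have c_gt := cos_2pi_div_lt k_ge3 p_lt1 hc p_gt.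
have pathM_x := pathM_candidate k_gt0 th_gt th_le.
have sum_x := candidate_sum1 k_gt0 th_gt th_le.
have x_gt0 := candidate_gt0 k_gt0 th_gt th_le.
have x_ge0 i : 0 <= x i by exact/ltW/x_gt0.
split.
- exact: g_Ptilde hc pathM_x sum_x p_lt1 c_gt x_ge0.
- exact: minimizer_Ptilde hc pathM_x sum_x p_lt1 c_gt x_ge0.
- exact: minimizer_Ptilde_uniq hc pathM_x sum_x p_lt1 c_gt x_ge0.
(* The strict inequality holds up to p = p_k (k+1) included. *)
- move=> _; rewrite (g_Ptilde hc pathM_x sum_x p_lt1 c_gt x_ge0).
  by apply: g_Ptilde_pred_gt hc c_gt pathM_x sum_x x_gt0; lia.
Qed.
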